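(* Let $(X_1,X_2)$ be a preliminary and a primary test statistic for one-sided hypotheses, with (continuous, strictly increasing) marginal CDFs $F_{0;X_1}$ and $F_{0;X_2}$ under the true null. Assume the classical errors-in-variables model $\widetilde X_1=X_1+\eta$, where $\eta$ is independent of $(X_1,X_2)$, and the probability density function of $X_1$ under the true null and the probability density function of $\eta$ are both symmetric with respect to $0$. Set $(p_1,p_2)=(F_{0;X_1}(X_1),F_{0;X_2}(X_2))$ and $\tilde p_1=F_{0;X_1}(\widetilde X_1)$ for left-sided hypotheses, or $(p_1,p_2)=(1-F_{0;X_1}(X_1),1-F_{0;X_2}(X_2))$ and $\tilde p_1=1-F_{0;X_1}(\widetilde X_1)$ for right-sided hypotheses. If the joint probability density function of $(p_1,p_2)$ under the true null is centrally symmetric with respect to $(1/2,1/2)$, i.e. $f_0(p_1,p_2)=f_0(1-p_1,1-p_2)$, then the joint probability density function of $(\tilde p_1,p_2)$ under the true null is also centrally symmetric with respect to $(1/2,1/2)$. *)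

From HB Require Import structures.
From mathcomp Require Import all_boot all_order all_algebra.
From mathcomp Require Import all_classical all_reals all_analysis.
Set Implicit Arguments. Unset Strict Implicit. Unset Printing Implicit Defensive.
Import Order.TTheory GRing.Theory Num.Theory.
Import numFieldNormedType.Exports.
Local Open Scope classical_set_scope.
Local Open Scope ring_scope.

Definition is_pdf d (T : measurableType d) (R : realType) (P : probability T R)
  dV (V : measurableType dV) (mu : set V -> \bar R) (Y : T -> V) (f : V -> R) :=
  [/\ (forall v, 0 <= f v), measurable_fun setT f &
      forall A, measurable A ->
        P (Y @^-1` A) = (\int[mu]_(v in A) (f v)%:E)%E].

Definition is_pdf1 d (T : measurableType d) (R : realType) (P : probability T R)
  (Y : T -> R) (f : R -> R) :=
  is_pdf P (@lebesgue_measure R) Y f.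

Definition is_pdf2 d (T : measurableType d) (R : realType) (P : probability T R)
  (Y : T -> R * R) (f : R * R -> R) :=
  is_pdf P ((@lebesgue_measure R) \x (@lebesgue_measure R))%E Y f.

Definition symmetric0 (R : realType) (g : R -> R) := forall x, g (- x) = g x.

Definition centrally_symmetric (R : realType) (f : R * R -> R) :=
  forall p1 p2, f (p1, p2) = f (1 - p1, 1 - p2).

Definition rcdf d (T : measurableType d) (R : realType) (P : probability T R)
  (X : {RV P >-> R}) (x : R) : R := fine (cdf X x).

Definition indep_RV_pair d (T : measurableType d) (R : realType)
  (P : probability T R) (eta : T -> R) (Y : T -> R * R) :=
  forall (A : set R) (B : set (R * R)), measurable A -> measurable B ->
    P (eta @^-1` A `&` Y @^-1` B) = (P (eta @^-1` A) * P (Y @^-1` B))%E.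

Definition pval (R : realType) (left_sided : bool) (F : R -> R) (x : R) : R :=
  if left_sided then F x else 1 - F x.

From HB Require Import structures.
From mathcomp Require Import all_boot all_order all_algebra.
From mathcomp Require Import all_classical all_reals all_analysis.
From mathcomp Require Import unstable measurable_realfun lra.
Set Implicit Arguments. Unset Strict Implicit. Unset Printing Implicit Defensive.
Import Order.TTheory GRing.Theory Num.Theory.
Import numFieldNormedType.Exports.
Local Open Scope classical_set_scope.
Local Open Scope ring_scope.

(* Let W = (X1, p2).  The density of X1 is even, so F1 (- x) = 1 - F1 x and the
   reflection X1 |-> - X1 turns p1 into 1 - p1; as F1 is strictly monotone, every
   Borel set of values of W is the preimage of a Borel set of values of (p1, p2).
   Hence the central symmetry of (p1, p2) makes the law of W invariant under
   (x, q) |-> (- x, 1 - q).  By independence the law of (eta, W) is the product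
   of the law of eta, which is even, and that of W, so it is invariant under
   (e, x, q) |-> (- e, - x, 1 - q), which maps (p1t, p2) to (1 - p1t, 1 - p2).
   Finally, a law invariant under the reflection through (1/2, 1/2) that has a
   density f also has the symmetrized density (f + f o reflection) / 2. *)

Definition prod_map {A B C D : Type} (f : A -> C) (g : B -> D) (z : A * B) : C * D :=
  (f z.1, g z.2).

Lemma measurable_prod_map d1 d2 d3 d4 (T1 : measurableType d1)
    (T2 : measurableType d2) (U1 : measurableType d3) (U2 : measurableType d4)
    (f : T1 -> U1) (g : T2 -> U2) :
  measurable_fun setT f -> measurable_fun setT g ->
  measurable_fun setT (prod_map f g).
Proof.
by move=> mf mg; apply: measurable_fun_pair;
  [exact: measurableT_comp mf measurable_fst|exact: measurableT_comp mg measurable_snd].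
Qed.

(* [pushforward m f] is a measure only given [measurable_fun setT f], which
   canonical structure inference cannot supply. *)
Definition pushforward_measure d1 d2 (T1 : measurableType d1)
    (T2 : measurableType d2) (R : realType) (m : {measure set T1 -> \bar R})
    (f : T1 -> T2) (mf : measurable_fun setT f) : {measure set T2 -> \bar R}.
Proof. by refine (pushforward m f : {measure set _ -> \bar R}). Defined.
Arguments pushforward_measure {d1 d2 T1 T2 R} m {f} mf.

Lemma pushforward_measureE d1 d2 (T1 : measurableType d1)
    (T2 : measurableType d2) (R : realType) (m : {measure set T1 -> \bar R})
    (f : T1 -> T2) (mf : measurable_fun setT f) A :
  pushforward_measure m mf A = m (f @^-1` A).
Proof. by []. Qed.

Lemma measurable_preimage d d' (V : measurableType d) (U : measurableType d')
    (f : V -> U) (A : set U) :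
  measurable_fun setT f -> measurable A -> measurable (f @^-1` A).
Proof. by move=> mf mA; rewrite -[X in measurable X]setTI; exact: mf. Qed.

Definition measure_invariant d (V : measurableType d) (R : realType)
    (m : set V -> \bar R) (phi : V -> V) :=
  forall A, measurable A -> m (phi @^-1` A) = m A.

Definition sigma_generating d d' (V : measurableType d) (U : measurableType d')
    (f : V -> U) :=
  measurable `<=` preimage_set_system setT f measurable.

Section invariance_transfer.
Context d d' (V : measurableType d) (U : measurableType d') (R : realType).
Implicit Types (m : set V -> \bar R) (phi : V -> V) (g : V -> U) (chi : U -> U).

Lemma measure_invariant_pushforward m phi g chi :
  measurable_fun setT g -> g \o phi = chi \o g ->
  measure_invariant m phi -> measure_invariant (pushforward m g) chi.
Proof.
move=> mg gphi minv A mA; rewrite /pushforward -comp_preimage -gphi comp_preimage.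
by rewrite minv //; exact: measurable_preimage.
Qed.

Lemma measure_invariant_pullback m phi g chi :
  sigma_generating g -> g \o phi = chi \o g ->
  measure_invariant (pushforward m g) chi -> measure_invariant m phi.
Proof.
move=> gen gphi minv A /gen[B mB <-]; rewrite setTI.
by rewrite -comp_preimage gphi comp_preimage; exact: minv.
Qed.
End invariance_transfer.

Section density_invariance.
Local Open Scope ereal_scope.
Context d (V : measurableType d) (R : realType) (mu : {measure set V -> \bar R}).
Variables (phi : V -> V) (mphi : measurable_fun setT phi).
Hypothesis mu_phi : measure_invariant mu phi.

Lemma integral_preimage_invariant (f : V -> R) A :
  (forall v, (0 <= f v)%R) -> measurable_fun setT f -> measurable A ->
  \int[mu]_(v in phi @^-1` A) (f (phi v))%:E = \int[mu]_(v in A) (f v)%:E.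
Proof.
move=> f0 mf mA.
transitivity (\int[pushforward_measure mu mphi]_(v in A) (f v)%:E); last first.
  by apply: eq_measure_integral => B mB _; rewrite pushforward_measureE mu_phi.
apply/esym; apply: (ge0_integral_pushforward mphi mu mA).
- by apply/measurable_EFinP; exact: measurable_funS mf.
- by move=> y _; rewrite lee_fin.
Qed.

Context dT (T : measurableType dT) (P : probability T R) (Y : T -> V).

Lemma pdf_law_invariant (f : V -> R) :
  is_pdf P mu Y f -> (forall v, f (phi v) = f v) ->
  measure_invariant (pushforward P Y) phi.
Proof.
move=> [f0 mf PY] fphi A mA; rewrite /pushforward !PY //; last first.
  exact: measurable_preimage.
rewrite -(integral_preimage_invariant f0 mf mA).
by apply: eq_integral => v _; rewrite fphi.
Qed.

Lemma pdf_symmetrize (f : V -> R) : cancel phi phi ->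
  is_pdf P mu Y f -> measure_invariant (pushforward P Y) phi ->
  is_pdf P mu Y (fun v => 2^-1 * (f v + f (phi v)))%R.
Proof.
move=> phiK [f0 mf PY] law_phi.
have mfphi : measurable_fun setT (f \o phi) by exact: measurableT_comp.
split.
- by move=> v; rewrite mulr_ge0 ?invr_ge0 ?addr_ge0.
- by apply: measurable_funM; [exact: measurable_cst|exact: measurable_funD].
move=> A mA; have mphiA := measurable_preimage mphi mA.
under eq_integral do rewrite EFinM EFinD.
rewrite ge0_integralZl //; last 2 first.
- apply/measurable_EFinP.
  by apply: measurable_funD; [exact: measurable_funS mf|exact: measurable_funS mfphi].
- by move=> v _; rewrite lee_fin addr_ge0.
rewrite ge0_integralD //; last 4 first.
- by move=> v _; rewrite lee_fin.
- by apply/measurable_EFinP; exact: measurable_funS mf.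
- by move=> v _; rewrite lee_fin.
- by apply/measurable_EFinP; exact: measurable_funS mfphi.
have phiphiA : phi @^-1` (phi @^-1` A) = A.
  by apply/seteqP; split => v /=; rewrite phiK.
rewrite -[in X in _ + X]phiphiA integral_preimage_invariant //.
have PYphi : P (Y @^-1` (phi @^-1` A)) = P (Y @^-1` A) := law_phi A mA.
rewrite -PY // -PY // PYphi -mule2n -mule_natl muleA -EFinM.
by rewrite mulVf ?pnatr_eq0 // mul1e.
Qed.
End density_invariance.

Section product_invariance.
Local Open Scope ereal_scope.
Context d1 d2 (T1 : measurableType d1) (T2 : measurableType d2) (R : realType).
Variables (phi1 : T1 -> T1) (phi2 : T2 -> T2).
Hypotheses (mphi1 : measurable_fun setT phi1) (mphi2 : measurable_fun setT phi2).

Lemma product_measure_invariant (m1 : {sigma_finite_measure set T1 -> \bar R})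
    (m2 : {sigma_finite_measure set T2 -> \bar R}) :
  measure_invariant m1 phi1 -> measure_invariant m2 phi2 ->
  measure_invariant (m1 \x m2) (prod_map phi1 phi2).
Proof.
move=> inv1 inv2 A mA; have mphi := measurable_prod_map mphi1 mphi2.
rewrite -(pushforward_measureE _ mphi); apply/esym.
apply: product_measure_unique => // B C mB mC; rewrite pushforward_measureE.
have -> : prod_map phi1 phi2 @^-1` (B `*` C) = phi1 @^-1` B `*` phi2 @^-1` C by [].
by rewrite -inv1 // -inv2 //; apply: product_measure1E; exact: measurable_preimage.
Qed.

Lemma indep_law_invariant d (T : measurableType d) (P : probability T R)
    (X : T -> T1) (Y : T -> T2) :
  measurable_fun setT X -> measurable_fun setT Y ->
  (forall A B, measurable A -> measurable B ->
    P (X @^-1` A `&` Y @^-1` B) = P (X @^-1` A) * P (Y @^-1` B)) ->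
  measure_invariant (pushforward P X) phi1 ->
  measure_invariant (pushforward P Y) phi2 ->
  measure_invariant (pushforward P (fun t => (X t, Y t))) (prod_map phi1 phi2).
Proof.
move=> mX mY indep inv1 inv2.
pose Xm : {mfun T >-> T1} := HB.pack X (isMeasurableFun.Build _ _ _ _ X mX).
pose Ym : {mfun T >-> T2} := HB.pack Y (isMeasurableFun.Build _ _ _ _ Y mY).
have mXY : measurable_fun setT (fun t => (X t, Y t)) by exact: measurable_fun_pair.
have law_XY C : measurable C ->
    pushforward P (fun t => (X t, Y t)) C = (distribution P Xm \x distribution P Ym) C.
  move=> mC; rewrite /pushforward -(pushforward_measureE _ mXY); apply/esym.
  by apply: product_measure_unique => // A B mA mB; exact: indep.
move=> C mC; rewrite !law_XY //; last first.
  exact: measurable_preimage (measurable_prod_map mphi1 mphi2) mC.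
exact: product_measure_invariant.
Qed.
End product_invariance.

Lemma sigma_generating_prod_map d1 d2 d' (T1 : measurableType d1)
    (T2 : measurableType d2) (U : measurableType d') (f : T1 -> U) :
  sigma_generating f -> sigma_generating (prod_map f (@id T2)).
Proof.
move=> gen S; rewrite measurable_prod_measurableType => mS.
apply: (smallest_sub _ _ mS).
  exact: sigma_algebra_preimage (sigma_algebra_measurable _).
move=> _ [A /gen[B mB <-]] [C mC] <-.
exists (B `*` C); first exact: measurableX.
by apply/seteqP; split => -[x y] /=; rewrite /prod_map /=; tauto.
Qed.

Section real_line.
Context (R : realType).
Local Notation mu := (@lebesgue_measure R).
(* Lebesgue measure, hence every density, lives on [measurableTypeR R], whose
   display differs from that of the default measurable structure of [R]; the
   two sigma-algebras are convertible. *)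
Local Notation mR := (measurableTypeR R).

Lemma measurable_onem : measurable_fun setT (@onem R : mR -> mR).
Proof. by apply: measurable_funB => //; exact: measurable_cst. Qed.

Lemma measurable_oppr : measurable_fun setT (-%R : mR -> mR).
Proof. exact: oppr_measurable. Qed.

Lemma lebesgue_measure_invariant_onem : measure_invariant mu (@onem R).
Proof.
move=> A mA; pose m := pushforward_measure mu measurable_onem.
change (m A = mu A); apply/esym; apply: lebesgue_measure_unique => //= _ [[a b]] _ <-.
rewrite /m (pushforward_measureE _ measurable_onem) /=.
have -> : @onem R @^-1` `]a, b]%classic = `[1 - b, 1 - a[%classic.
  by apply/seteqP; split => x /=; rewrite /onem !in_itv /= => /andP[? ?];
    apply/andP; split; lra.
rewrite !lebesgue_measure_itv /= !lte_fin ltrD2l ltrN2.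
by case: ifP => // _; rewrite -EFinB; congr (_%:E); lra.
Qed.

Lemma lebesgue_measure2_invariant_onem :
  measure_invariant (mu \x mu)%E (prod_map (@onem R) (@onem R)).
Proof.
by apply: product_measure_invariant;
  [exact: measurable_onem|exact: measurable_onem|exact: lebesgue_measure_invariant_onem|
   exact: lebesgue_measure_invariant_onem].
Qed.

Lemma sigma_generating_halflines d' (U : measurableType d') (f : mR -> U) :
  (forall a, exists2 J, measurable J & `]-oo, a[%classic = f @^-1` J) ->
  sigma_generating f.
Proof.
move=> halfline A mA.
have : (@RGenInftyO.G R).-sigma.-measurable A by rewrite -RGenInftyO.measurableE.
apply: smallest_sub.
  exact: sigma_algebra_preimage (sigma_algebra_measurable _).
move=> _ [a ->]; have [J mJ ->] := halfline a.
by exists J; rewrite ?setTI.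
Qed.

Lemma rcdfN d (T : measurableType d) (P : probability T R) (X : {RV P >-> R})
    (g : R -> R) :
  is_pdf1 P X g -> symmetric0 g -> forall x, rcdf X (- x) = 1 - rcdf X x.
Proof.
move=> pg sg x; have [g0 mg PX] := pg.
have lawN := pdf_law_invariant measurable_oppr lebesgue_measureN pg sg.
have atomless : P (X @^-1` `]-oo, x[) = P (X @^-1` `]-oo, x]).
  rewrite !PX // integral_itv_bndo_bndc //.
  by apply/measurable_EFinP; exact: measurable_funS mg.
rewrite /rcdf /cdf /distribution /pushforward.
have := lawN `[x, +oo[%classic (measurable_itv _).
rewrite /pushforward opp_preimage_itvbndy => ->.
have -> : X @^-1` `[x, +oo[ = ~` (X @^-1` `]-oo, x[).
  by apply/seteqP; split => t /=; rewrite !in_itv /= andbT leNgt => /negP.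
rewrite probability_setC ?atomless; last exact: measurable_funPTI.
by rewrite fineB // fin_num_measure //; exact: measurable_funPTI.
Qed.

Lemma pvalN (b : bool) (F : R -> R) : (forall x, F (- x) = 1 - F x) ->
  forall x, pval b F (- x) = onem (pval b F x).
Proof. by move=> FN x; case: b; rewrite /pval /onem FN // opprB addrC subrK. Qed.

Lemma measurable_pval (b : bool) (F : R -> R) : continuous F ->
  measurable_fun setT (pval b F : mR -> mR).
Proof.
move=> cF; have mF : measurable_fun setT (F : mR -> mR).
  exact: continuous_measurable_fun.
by case: b => //; apply: measurable_funB => //; exact: measurable_cst.
Qed.

Lemma sigma_generating_pval (b : bool) (F : R -> R) :
  {homo F : x y / x < y} -> sigma_generating (pval b F : mR -> mR).
Proof.
move=> /le_mono/leW_mono Fmono; apply: sigma_generating_halflines => a.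
case: b; rewrite /pval.
- exists `]-oo, F a[%classic => //.
  by apply/seteqP; split => x /=; rewrite !in_itv /= Fmono.
- exists `]1 - F a, +oo[%classic => //.
  by apply/seteqP; split => x /=; rewrite !in_itv /= andbT ltrD2l ltrN2 Fmono.
Qed.

Section centrally_symmetric.
Context d (T : measurableType d) (P : probability T R) (Y : T -> mR * mR).
Local Notation reflect2 := (prod_map (@onem R) (@onem R)).

Lemma centrally_symmetric_pdf_invariant (f : R * R -> R) :
  is_pdf2 P Y f -> centrally_symmetric f -> measure_invariant (pushforward P Y) reflect2.
Proof.
move=> pf sf; have mreflect2 := measurable_prod_map measurable_onem measurable_onem.
by apply: (pdf_law_invariant mreflect2 lebesgue_measure2_invariant_onem pf) => -[p q];
  exact/esym/sf.
Qed.

Lemma invariant_law_centrally_symmetric_pdf (f : R * R -> R) :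
  is_pdf2 P Y f -> measure_invariant (pushforward P Y) reflect2 ->
  exists f', is_pdf2 P Y f' /\ centrally_symmetric f'.
Proof.
move=> pf law_inv; eexists; split.
- have mreflect2 := measurable_prod_map measurable_onem measurable_onem.
  apply: (pdf_symmetrize mreflect2 lebesgue_measure2_invariant_onem _ pf law_inv).
  by move=> [p q]; rewrite /prod_map /= !onemK.
- by move=> p q; rewrite /prod_map /= !onemK addrC.
Qed.

End centrally_symmetric.

Lemma pval_pair_law_invariant d (T : measurableType d) (P : probability T R)
    (b : bool) (F : R -> R) (X Y : T -> R) (f : R * R -> R) :
  {homo F : x y / x < y} -> (forall x, F (- x) = 1 - F x) ->
  is_pdf2 P (fun t => (pval b F (X t), Y t)) f -> centrally_symmetric f ->
  measure_invariant (pushforward P (fun t => (X t, Y t))) (prod_map -%R (@onem R)).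
Proof.
move=> Fmono FN pf sf.
apply: (@measure_invariant_pullback _ _ _ _ _ _ _ (prod_map (pval b F) id)
  (prod_map (@onem R) (@onem R))).
- exact: sigma_generating_prod_map (sigma_generating_pval _ Fmono).
- by apply/funext => -[x y]; rewrite /prod_map /= pvalN.
- exact: centrally_symmetric_pdf_invariant pf sf.
Qed.

Lemma indep_RV_pair_comp d (T : measurableType d) (P : probability T R)
    (eta : T -> R) (Y : T -> R * R) (G : mR * mR -> mR * mR) :
  measurable_fun setT G -> indep_RV_pair P eta Y -> indep_RV_pair P eta (G \o Y).
Proof.
move=> mG indep A B mA mB; apply: (indep _ (G @^-1` B)) => //.
exact: measurable_preimage mG mB.
Qed.
End real_line.

Theorem proposition3 (d : measure_display) (T : measurableType d) (R : realType)
  (P : probability T R) (X1 X2 eta : {RV P >-> R}) (left_sided : bool) :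
  let F1 := rcdf X1 in
  let F2 := rcdf X2 in
  let X1t := fun t => X1 t + eta t in
  let p1 := fun t => pval left_sided F1 (X1 t) in
  let p2 := fun t => pval left_sided F2 (X2 t) in
  let p1t := fun t => pval left_sided F1 (X1t t) in
  continuous F1 -> {homo F1 : x y / x < y} ->
  continuous F2 -> {homo F2 : x y / x < y} ->
  indep_RV_pair P eta (fun t => (X1 t, X2 t)) ->
  (exists g, is_pdf1 P X1 g /\ symmetric0 g) ->
  (exists h, is_pdf1 P eta h /\ symmetric0 h) ->
  (exists f0, is_pdf2 P (fun t => (p1 t, p2 t)) f0 /\ centrally_symmetric f0) ->
  (exists f, is_pdf2 P (fun t => (p1t t, p2 t)) f) ->
  exists f, is_pdf2 P (fun t => (p1t t, p2 t)) f /\ centrally_symmetric f.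
Proof.
move=> F1 F2 X1t p1 p2 p1t cF1 hF1 cF2 hF2 indep [g [pg sg]] [h [ph sh]]
  [f0 [pf0 sf0]] [f pf].
pose W t := (X1 t, p2 t).
have mW : measurable_fun setT W.
  apply: measurable_fun_pair; first exact: measurable_funPT.
  exact: measurableT_comp (measurable_pval _ cF2) (measurable_funPT X2).
have lawW := pval_pair_law_invariant hF1 (rcdfN pg sg) pf0 sf0.
have lawEta := pdf_law_invariant (@measurable_oppr R) lebesgue_measureN ph sh.
have indepW : indep_RV_pair P eta W := indep_RV_pair_comp
  (measurable_prod_map (@measurable_id _ _ setT) (measurable_pval _ cF2)) indep.
have lawZ := indep_law_invariant (@measurable_oppr R)
  (measurable_prod_map (@measurable_oppr R) (@measurable_onem R))
  (measurable_funPT eta) mW indepW lawEta lawW.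
apply: (invariant_law_centrally_symmetric_pdf pf).
pose Phi (z : R * (R * R)) := (pval left_sided F1 (z.2.1 + z.1), z.2.2).
have mPhi : measurable_fun setT Phi.
  apply: measurable_fun_pair; last exact: measurableT_comp measurable_snd measurable_snd.
  apply: measurableT_comp (measurable_pval _ cF1) (measurable_funD _ measurable_fst).
  exact: measurableT_comp measurable_fst measurable_snd.
apply: (measure_invariant_pushforward mPhi _ lawZ).
apply/funext => -[e [x q]].
by rewrite /Phi /prod_map /= -opprD (pvalN _ (rcdfN pg sg)).
Qed.
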